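(* Let $m\ge 1$ and $1\le t\le 2^{m-1}$ be integers and $p=t/2^m$. For $j=1,\dots,m$ let \[ a_j(t)=\min\big(t \bmod 2^{m-j+1},\;2^{m-j+1}-(t\bmod 2^{m-j+1})\big). \] Let $f:\{0,1\}^n\to\mathbb{R}$ and $g=\mathrm{Red}(f):\{0,1\}^{mn}\to\mathbb{R}$ as defined below. For $S\subseteq\{1,\dots,mn\}$ let $S_i=S\cap\{(i-1)m+1,\dots,im\}$, let $S'=\{i:|S_i|>0\}$, $k=|S'|$, and for $i\in S'$ let $s_i=\max(S_i)-(i-1)m$. Then \[ |\hat g(S)|=\Big(\prod_{i\in S'}\frac{a_{s_i}(t)}{t}\Big)\Big(\sqrt{\tfrac{p}{1-p}}\Big)^k|\hat f(S')|. \] Furthermore, if $s_i\le\lfloor\log(1/p)\rfloor$ for every $i\in S'$, then \[ \hat g(S)=\Big(-\sqrt{\tfrac{p}{1-p}}\Big)^k(-1)^{|S|}\hat f(S'). \] Here $\hat g$ is w.r.t. the uniform measure on $\{0,1\}^{mn}$ and $\hat f$ w.r.t. $\mu_p$.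
   Context: For $0<p<1$, $\mu_p$ denotes the product measure on $\{0,1\}^n$ with $\mu_p(x)=p^{\sum_i x_i}(1-p)^{n-\sum_i x_i}$; $\mu_{1/2}$ is the uniform measure. Elements of $\{0,1\}^n$ are identified with subsets of $\{1,\dots,n\}$. For $S,T\subseteq\{1,\dots,n\}$, $u_S(T)=\big(-\sqrt{(1-p)/p}\big)^{|S\cap T|}\big(\sqrt{p/(1-p)}\big)^{|S\setminus T|}$ (for $p=1/2$, $u_S(T)=(-1)^{|S\cap T|}$); these form an orthonormal basis of $L^2(\mu_p)$ and $\hat f(S)=\mathbb{E}_{\mu_p}[fu_S]$. Reduction: write $y\in\{0,1\}^{mn}$ as $(y^1,\dots,y^n)$, $y^i=(y^i_1,\dots,y^i_m)\in\{0,1\}^m$, where $y^i_j$ is coordinate $(i-1)m+j$ of $y$. Let $\mathrm{Bin}(y^i)=\sum_{j=0}^{m-1}2^jy^i_{m-j}$, $h(y^i)=1$ if $\mathrm{Bin}(y^i)\ge 2^m-t$ and $0$ otherwise, and $g=\mathrm{Red}(f)$, $g(y)=f(h(y^1),\dots,h(y^n))$. $\log$ is base 2. *)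

From HB Require Import structures.
From mathcomp Require Import all_boot all_order all_algebra.
From mathcomp Require Import reals exp.
Set Implicit Arguments. Unset Strict Implicit. Unset Printing Implicit Defensive.
Import Order.TTheory GRing.Theory Num.Theory.
Local Open Scope ring_scope.

Section Fourier.
Variables (R : realType) (I : finType).

(* mu_p(x) = p^{|x|} (1-p)^{N-|x|}, elements of {0,1}^N identified with subsets *)
Definition mu_p (p : R) (T : {set I}) : R :=
  p ^+ #|T| * (1 - p) ^+ (#|I| - #|T|).

Definition u_S (p : R) (S T : {set I}) : R :=
  (- Num.sqrt ((1 - p) / p)) ^+ #|S :&: T| * (Num.sqrt (p / (1 - p))) ^+ #|S :\: T|.

Definition fourier (p : R) (f : {set I} -> R) (S : {set I}) : R :=
  \sum_(T : {set I}) mu_p p T * f T * u_S p S T.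
End Fourier.

Local Open Scope nat_scope.

(* 0-based indexing: coordinate (i-1)m+j (1-based, i in 1..n, j in 1..m)
   is the ordinal i'*m + j' with i' = i-1, j' = j-1. *)
Definition bit (N : nat) (y : {set 'I_N}) (k : nat) : nat :=
  [exists x in y, val x == k].

(* Bin(y^i) = sum_{j=0}^{m-1} 2^j y^i_{m-j}; with 0-based jj = m-1-j,
   bit y^i_{jj+1} has weight 2^(m-1-jj). *)
Definition Bin (m n : nat) (y : {set 'I_(m * n)}) (i : 'I_n) : nat :=
  \sum_(jj < m) 2 ^ (m - 1 - jj) * bit y (i * m + jj).

Definition hred (m t n : nat) (y : {set 'I_(m * n)}) (i : 'I_n) : bool :=
  2 ^ m - t <= Bin y i.

Definition Red (R : Type) (m t n : nat) (f : {set 'I_n} -> R)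
  (y : {set 'I_(m * n)}) : R :=
  f [set i : 'I_n | hred t y i].

Definition a_coef (m t j : nat) : nat :=
  minn (t %% 2 ^ (m - j + 1)) (2 ^ (m - j + 1) - t %% 2 ^ (m - j + 1)).

Definition Sblock (m n : nat) (S : {set 'I_(m * n)}) (i : 'I_n) : {set 'I_(m * n)} :=
  [set x in S | i * m <= val x < i * m + m].

Definition Sprime (m n : nat) (S : {set 'I_(m * n)}) : {set 'I_n} :=
  [set i : 'I_n | 0 < #|Sblock S i|].

(* s_i = max(S_i) - (i-1)m, a value in 1..m *)
Definition s_idx (m n : nat) (S : {set 'I_(m * n)}) (i : 'I_n) : nat :=
  (\max_(x in Sblock S i) val x) - i * m + 1.
Arguments Red {R} m t {n} f y.
Arguments a_coef m t j.

From HB Require Import structures.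
From mathcomp Require Import all_boot all_order all_algebra.
From mathcomp Require Import reals exp.
From mathcomp Require Import zify ring.
Set Implicit Arguments. Unset Strict Implicit. Unset Printing Implicit Defensive.
Import Order.TTheory GRing.Theory Num.Theory.

(* Write [v_i = Bin(y^i) < 2^m] for the blocks of [y]; [y |-> (v_i)_i] is a bijection and
   [(-1)^|S :&: y|] is the product over the blocks of the Walsh function [walsh m (S_i)] at
   [v_i].  Grouping the tuples [(v_i)] by the pattern [x = h(y)] gives
   [g^(S) = sum_x f(x) prod_i 2^-m D_i(x_i)], where [D_i(b)] sums the [i]-th Walsh function
   over the [v] with [h(v) = b].  Off [S'] this is exactly the [mu_p] weight of [x_i]; on [S']
   the Walsh function has mean zero, so [D_i(false) = - D_i(true)] and [2^-m D_i(x_i)] is the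
   [mu_p * u_S'] weight times the constant [- D_i(true) sqrt(p/(1-p)) / t].  Finally, with
   [s_i] the position of the last bit of [S_i], the Walsh function on an aligned window of
   [2^(m-s_i+1)] consecutive integers is a fixed sign times [+1] on the first half and [-1]
   on the second half; this gives [|D_i(true)| = a_(s_i)(t)], and when [t <= 2^(m-s_i)] the
   top [t] integers all have ones in their first [s_i] bits, so [D_i(true) = t (-1)^|S_i|]. *)

Definition bits_val (k : nat) (d : nat -> bool) : nat :=
  \sum_(j < k) 2 ^ (k - 1 - j) * d j.

Lemma bits_valS k d : bits_val k.+1 d = (bits_val k d).*2 + d k.
Proof.
rewrite /bits_val big_ord_recr /= subSS subn0 subnn expn0 mul1n -mul2n big_distrr /=.
congr (_ + _); apply: eq_bigr => j _.
rewrite mulnA -expnS; congr (2 ^ _ * _).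
have := ltn_ord j; lia.
Qed.

Lemma bits_val_lt k d : bits_val k d < 2 ^ k.
Proof.
elim: k => [|k IH]; first by rewrite /bits_val big_ord0.
by rewrite bits_valS expnS; case: (d k) => /=; lia.
Qed.

Lemma bits_val_true k : bits_val k (fun=> true) = (2 ^ k - 1)%N.
Proof.
elim: k => [|k IH]; first by rewrite /bits_val big_ord0.
by rewrite bits_valS IH expnS -!muln2 /=; have := expn_gt0 2 k; lia.
Qed.

Lemma odd_bits_val_div k d j : j < k -> odd (bits_val k d %/ 2 ^ (k - 1 - j)) = d j.
Proof.
elim: k => [|k IH] // lt_jk1; rewrite bits_valS.
have half : ((bits_val k d).*2 + d k) %/ 2 = bits_val k d.
  by rewrite -muln2 divnMDl // divn_small ?addn0 //; case: (d k).
case: (ltngtP j k) => [lt_jk | | ->]; last 2 first.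
- lia.
- by rewrite subSS subn0 subnn expn0 divn1 oddD odd_double; case: (d k).
have -> : k.+1 - 1 - j = (k - 1 - j).+1 by lia.
by rewrite expnS divnMA half IH.
Qed.

Lemma minn_modn_sub L c x : x <= c * L ->
  minn ((c * L - x) %% L) (L - (c * L - x) %% L) = minn (x %% L) (L - x %% L).
Proof.
move=> le_x_cL; have [->|L_gt0] := posnP L.
  by rewrite muln0 sub0n mod0n !modn0 !sub0n minn0.
set r := x %% L; have lt_rL : r < L by rewrite ltn_pmod.
have -> : (c * L - x) %% L = (L - r) %% L.
  apply/eqP; rewrite -(eqn_modDr x) subnK // (divn_eq x L) -/r.
  have -> : L - r + (x %/ L * L + r) = (x %/ L).+1 * L by rewrite mulSn; lia.
  by rewrite !modnMl.
have [r0|r_gt0] := posnP r; first by rewrite r0 subn0 modnn !min0n.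
rewrite (modn_small (_ : L - r < L)); last by lia.
by rewrite subKn ?(ltnW lt_rL) // minnC.
Qed.

Local Open Scope ring_scope.

(* Bit [j] of [v < 2^m] is read most significant first, as in [Bin]. *)
Definition walsh (R : ringType) (m : nat) (P : pred nat) (v : nat) : R :=
  \prod_(j < m | P j) (-1) ^+ odd (v %/ 2 ^ (m - 1 - j))%N.
Arguments walsh {R}.

Lemma walsh_bits_val (R : ringType) m (P : pred nat) d :
  walsh m P (bits_val m d) = \prod_(j < m | P j) (-1) ^+ d j :> R.
Proof. by apply: eq_bigr => j _; rewrite odd_bits_val_div. Qed.

Lemma sum_sign_threshold (R : ringType) w k :
  \sum_(r < k) (if (w <= r)%N then -1 else 1 : R) = (minn k w)%:R - (k - w)%:R.
Proof.
elim: k => [|k IH]; first by rewrite big_ord0 min0n sub0n subrr.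
rewrite big_ord_recr /= IH; case: (leqP w k) => h.
- rewrite (minn_idPr _) ?subSn ?(leqW h) // -addn1 natrD.
  by rewrite opprD addrA.
- rewrite (minn_idPl h).
  have [-> ->] : (k.+1 - w = 0 /\ k - w = 0)%N by lia.
  by rewrite !mulr0n !subr0 -addn1 natrD.
Qed.

Lemma walsh_all_ones (R : ringType) m (P : pred nat) :
  walsh m P (2 ^ m - 1) = \prod_(j < m | P j) (-1) :> R.
Proof. by rewrite -bits_val_true walsh_bits_val. Qed.

Lemma normr_walsh (R : numDomainType) m (P : pred nat) v : `|walsh m P v : R| = 1.
Proof. by rewrite normr_prod big1 // => j _; rewrite normrX normrN1 expr1n. Qed.

Section WalshPeriod.
Variables (m s : nat) (P : pred nat).
Hypotheses (s_lt_m : (s < m)%N) (Ps : P s)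
  (P_le_s : forall j, (j < m)%N -> P j -> (j <= s)%N).

Local Notation half := (2 ^ (m - 1 - s))%N.
Local Notation period := (2 ^ (m - s))%N.

Lemma period_double : period = (half * 2)%N.
Proof. by rewrite -expnSr; congr (2 ^ _)%N; lia. Qed.

Lemma expn_m_period : (2 ^ m = 2 ^ s * period)%N.
Proof. by rewrite -expnD; congr (2 ^ _)%N; lia. Qed.

Section WalshSums.
Variable R : comRingType.

(* Adding [r < period] to a multiple of the period keeps the bits before [s]; the bits after
   [s] are outside [P], and bit [s] is set iff [r >= half]. *)
Lemma walsh_periodD q r : (r < period)%N ->
  walsh m P (q * period + r) = walsh m P (q * period) * (if (half <= r)%N then -1 else 1) :> R.
Proof.
move=> lt_r_period.
rewrite /walsh (bigD1 (Ordinal s_lt_m)) //= [in RHS](bigD1 (Ordinal s_lt_m)) //= mulrAC.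
have half_gt0 : (0 < half)%N by rewrite expn_gt0.
congr (_ * _); last first.
  apply: eq_bigr => j /andP[Pj ne_js].
  have lt_js : (j < s)%N.
    rewrite ltn_neqAle P_le_s // andbT; apply: contra ne_js => /eqP e.
    by apply/eqP/val_inj.
  have -> : (2 ^ (m - 1 - j) = period * 2 ^ (s - 1 - j))%N.
    by rewrite -expnD; congr (2 ^ _)%N; lia.
  by rewrite !divnMA divnMDl ?expn_gt0 // mulnK ?expn_gt0 // (divn_small lt_r_period) addn0.
have digit_s : ((q * period + r) %/ half = q * 2 + (half <= r))%N.
  rewrite period_double mulnA mulnAC divnMDl //; congr (_ + _)%N.
  case: leqP => h; last by rewrite divn_small.
  apply/eqP; rewrite eqn_leq leq_divRL // mul1n h andbT -ltnS ltn_divLR //.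
  by move: lt_r_period; rewrite period_double; lia.
rewrite digit_s period_double mulnA mulnAC mulnK // oddD oddM andbF /=.
by case: (half <= r)%N; rewrite /= expr0 mul1r ?expr1.
Qed.

Lemma sum_walsh_mulr b : \sum_(v < b * period) walsh m P v = 0 :> R.
Proof.
elim: b => [|b IH]; first by rewrite mul0n big_ord0.
rewrite mulSnr big_split_ord /= IH add0r.
under eq_bigr => r _ do rewrite walsh_periodD ?ltn_ord //.
rewrite -big_distrr /= sum_sign_threshold period_double (minn_idPr _) ?leq_pmulr //.
have -> : (half * 2 - half = half)%N by lia.
by rewrite subrr mulr0.
Qed.

Lemma sum_walsh_prefix K : \sum_(v < K) walsh m P v =
  walsh m P (K %/ period * period) *
    ((minn (K %% period) half)%:R - (K %% period - half)%:R) :> R.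
Proof.
transitivity (\sum_(v < K %/ period * period + K %% period) walsh m P v : R).
  by rewrite -divn_eq.
have lt_period (r : 'I_(K %% period)) : (r < period)%N.
  by rewrite (ltn_trans (ltn_ord r)) // ltn_pmod ?expn_gt0.
rewrite big_split_ord /= sum_walsh_mulr add0r.
under eq_bigr => r _ do rewrite (walsh_periodD _ (lt_period r)).
by rewrite -big_distrr /= sum_sign_threshold.
Qed.

Lemma sum_walsh : \sum_(v < 2 ^ m) walsh m P v = 0 :> R.
Proof. by rewrite expn_m_period sum_walsh_mulr. Qed.

Lemma sum_walsh_top t : (t <= 2 ^ m)%N ->
  \sum_(2 ^ m - t <= v < 2 ^ m) walsh m P v = - \sum_(v < 2 ^ m - t) walsh m P v :> R.
Proof.
move=> le_t; apply/eqP; rewrite -addr_eq0 addrC; apply/eqP.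
have := sum_walsh; rewrite -(big_mkord xpredT (fun v => walsh m P v)).
by rewrite (big_cat_nat (leq0n (2 ^ m - t)) (leq_subr t (2 ^ m))) /= big_mkord.
Qed.

Lemma sum_walsh_top_small t : (0 < t <= half)%N ->
  \sum_(2 ^ m - t <= v < 2 ^ m) walsh m P v = t%:R * \prod_(j < m | P j) (-1) :> R.
Proof.
move=> /andP[t_gt0 le_t_half].
have le_period : (period <= 2 ^ s * period)%N by rewrite leq_pmull ?expn_gt0.
have le_t_period : (t <= period)%N by rewrite period_double; lia.
have top_split : (2 ^ m - t = (2 ^ s - 1) * period + (period - t))%N.
  by rewrite expn_m_period mulnBl mul1n; lia.
have lt_t_period : (period - t < period)%N by lia.
rewrite sum_walsh_top; last by rewrite expn_m_period; lia.
rewrite sum_walsh_prefix top_split divnMDl ?expn_gt0 // modnMDl divn_small //.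
rewrite modn_small // addn0.
have all_ones : walsh m P ((2 ^ s - 1) * period) = - \prod_(j < m | P j) (-1) :> R.
  have period_gt0 : (0 < period)%N by rewrite expn_gt0.
  have lt_pred : (period.-1 < period)%N by rewrite ltn_predL.
  have := walsh_periodD (2 ^ s - 1) lt_pred.
  rewrite (_ : (2 ^ s - 1) * period + period.-1 = 2 ^ m - 1)%N; last first.
    by rewrite expn_m_period mulnBl mul1n; lia.
  rewrite walsh_all_ones ifT; last by rewrite period_double; lia.
  by move=> ->; rewrite mulrN1 opprK.
have [-> ->] : minn (period - t) half = half /\ (period - t - half = half - t)%N.
  by rewrite period_double; split; [apply/minn_idPr|]; lia.
by rewrite all_ones natrB //; ring.
Qed.
End WalshSums.

Section WalshNorms.
Variable R : numDomainType.

Lemma normr_sum_walsh_prefix K :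
  `|\sum_(v < K) walsh m P v : R| = (minn (K %% period) (period - K %% period))%:R.
Proof.
rewrite sum_walsh_prefix normrM normr_walsh mul1r.
have lt_r : (K %% period < period)%N by rewrite ltn_pmod ?expn_gt0.
move: lt_r; set r := (K %% period)%N; rewrite period_double => lt_r.
case: (leqP r half) => h.
  have [-> ->] : (r - half = 0 /\ minn r (half * 2 - r) = r)%N.
    by split; [|apply/minn_idPl]; lia.
  by rewrite mulr0n subr0 normr_nat.
rewrite -natrB; last by lia.
by rewrite normr_nat; congr _%:R; lia.
Qed.

Lemma normr_sum_walsh_top t : (t <= 2 ^ m)%N ->
  `|\sum_(2 ^ m - t <= v < 2 ^ m) walsh m P v : R| =
    (minn (t %% period) (period - t %% period))%:R.
Proof.
move=> le_t; rewrite sum_walsh_top // normrN normr_sum_walsh_prefix expn_m_period.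
by rewrite minn_modn_sub // -expn_m_period.
Qed.
End WalshNorms.
End WalshPeriod.

Lemma sum_ffun_pattern (R : comSemiRingType) (I V : finType) (A : pred V)
    (c : I -> V -> R) (F : {set I} -> R) :
  \sum_(Y : {ffun I -> V}) F [set i | A (Y i)] * \prod_i c i (Y i) =
  \sum_(x : {set I}) F x * \prod_i \sum_(v | A v == (i \in x)) c i v.
Proof.
transitivity (\sum_(x : {set I}) \sum_(Y : {ffun I -> V})
    F x * \prod_i (if A (Y i) == (i \in x) then c i (Y i) else 0)); last first.
  apply: eq_bigr => x _; symmetry.
  rewrite (eq_bigr (fun i => \sum_v if A v == (i \in x) then c i v else 0)).
    by rewrite bigA_distr_bigA big_distrr.
  by move=> i _; rewrite big_mkcond.
rewrite exchange_big /=; apply: eq_bigr => Y _.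
rewrite (bigD1 [set i | A (Y i)]) //= [X in _ + X]big1 ?addr0 => [|x ne_x].
  by congr (_ * _); apply: eq_bigr => i _; rewrite inE eqxx.
have [i mismatch | all_eq] := pickP (fun i => A (Y i) != (i \in x)).
  by rewrite (bigD1 i) //= ifN // mul0r mulr0.
by case/eqP: ne_x; apply/setP => i; rewrite inE; move: (all_eq i) => /negbFE /eqP.
Qed.

Lemma prod_if_mem (R : comSemiRingType) (I : finType) (X : {set I}) (a : R) :
  \prod_i (if i \in X then a else 1) = a ^+ #|X|.
Proof. by rewrite -big_mkcond prodr_const. Qed.

Section BiasedMeasure.
Variables (R : realType) (I : finType).

Lemma mu_p_prod (p : R) x : mu_p p x = \prod_(i : I) (if i \in x then p else 1 - p).
Proof.
rewrite (eq_bigr (fun i => (if i \in x then p else 1) * (if i \in ~: x then 1 - p else 1))).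
  by rewrite big_split /= !prod_if_mem /mu_p -(cardsC x) addKn.
by move=> i _; rewrite inE; case: (i \in x); rewrite ?mulr1 ?mul1r.
Qed.

Lemma u_S_prod (p : R) T x : u_S p T x = \prod_(i : I)
  (if i \in T then (if i \in x then - Num.sqrt ((1 - p) / p) else Num.sqrt (p / (1 - p))) else 1).
Proof.
rewrite (eq_bigr (fun i => (if i \in T :&: x then - Num.sqrt ((1 - p) / p) else 1) *
                           (if i \in T :\: x then Num.sqrt (p / (1 - p)) else 1))).
  by rewrite big_split /= !prod_if_mem.
by move=> i _; rewrite !inE; case: (i \in T); case: (i \in x); rewrite ?mulr1 ?mul1r.
Qed.

Lemma fourier_half (f : {set I} -> R) S :
  fourier 2^-1 f S = 2^-1 ^+ #|I| * \sum_y f y * (-1) ^+ #|S :&: y|.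
Proof.
rewrite big_distrr; apply: eq_bigr => y _; rewrite /mu_p /u_S.
have half_half : 1 - 2^-1 = 2^-1 :> R by field.
rewrite half_half divff ?invr_eq0 ?pnatr_eq0 // sqrtr1 expr1n mulr1 -exprD.
by rewrite subnKC ?max_card // -mulrA.
Qed.
End BiasedMeasure.

(* [bit] without the coercion to [nat]. *)
Definition mem_index N (y : {set 'I_N}) (k : nat) : bool := [exists x in y, val x == k].

Lemma mem_index_ord N (y : {set 'I_N}) (x : 'I_N) : mem_index y x = (x \in y).
Proof.
apply/existsP/idP => [[z /andP[zy /eqP e]]|xy]; last by exists x; rewrite xy eqxx.
by rewrite (_ : x = z) //; apply: val_inj.
Qed.

Lemma big_ord_blocks (R : Type) (idx : R) (op : Monoid.law idx) m n (F : nat -> R) :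
  \big[op/idx]_(x < m * n) F x = \big[op/idx]_(i < n) \big[op/idx]_(j < m) F (i * m + j)%N.
Proof.
elim: n => [|n IH]; first by rewrite muln0 !big_ord0.
rewrite mulnSr big_split_ord /= IH big_ord_recr /=; congr (op _ _).
by apply: eq_bigr => j _; rewrite mulnC.
Qed.

Section Blocks.
Variables (m n : nat).
Implicit Type y : {set 'I_(m * n)}.

Definition block_bits y (i j : nat) : bool := mem_index y (i * m + j).

Definition block_code y : {ffun 'I_n -> 'I_(2 ^ m)} :=
  [ffun i : 'I_n => Ordinal (bits_val_lt m (block_bits y i))].

Lemma Bin_block_code y i : Bin y i = block_code y i.
Proof. by rewrite ffunE. Qed.

Lemma block_code_bij : (0 < m)%N -> bijective block_code.
Proof.
move=> m_gt0; apply: inj_card_bij => [y y' eq_code|]; last first.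
  have card_sets : #|{set 'I_(m * n)}| = (2 ^ (m * n))%N.
    by rewrite -cardsT -powersetT card_powerset cardsT card_ord.
  by rewrite card_ffun card_sets !card_ord -expnM mulnC.
apply/setP => x.
have x_div : (x %/ m < n)%N by rewrite ltn_divLR // [(n * m)%N]mulnC.
have x_mod : (x %% m < m)%N by rewrite ltn_mod.
have := congr1 (fun c : {ffun 'I_n -> 'I_(2 ^ m)} => val (c (Ordinal x_div))) eq_code.
rewrite /= !ffunE /= => eq_val.
have := odd_bits_val_div (block_bits y (x %/ m)) x_mod.
by rewrite eq_val odd_bits_val_div // /block_bits -divn_eq !mem_index_ord.
Qed.

Lemma block_bits_notin (S : {set 'I_(m * n)}) (i : 'I_n) j :
  i \notin Sprime S -> (j < m)%N -> ~~ block_bits S i j.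
Proof.
move=> notin_i lt_jm; apply: contra notin_i => /existsP[x /andP[xS /eqP val_x]].
by rewrite inE; apply/card_gt0P; exists x; rewrite inE xS val_x /=; lia.
Qed.

Lemma Sprime_max_bit (S : {set 'I_(m * n)}) (i : 'I_n) : i \in Sprime S ->
  exists s, [/\ (s < m)%N, block_bits S i s,
    forall j, (j < m)%N -> block_bits S i j -> (j <= s)%N & s_idx S i = s.+1].
Proof.
rewrite inE => nonempty.
have [x x_block x_max] := eq_bigmax_cond (fun x : 'I_(m * n) => nat_of_ord x) nonempty.
move: (x_block); rewrite inE /= => /andP[xS /andP[lo hi]].
exists (x - i * m)%N; split.
- lia.
- by rewrite /block_bits subnKC // mem_index_ord.
- move=> j lt_jm /existsP[z /andP[zS /eqP /= val_z]].
  have z_block : z \in Sblock S i by rewrite inE zS /= val_z; lia.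
  have := @leq_bigmax_cond _ (fun x => x \in Sblock S i)
    (fun x : 'I_(m * n) => nat_of_ord x) z z_block.
  by rewrite x_max val_z; lia.
- by rewrite /s_idx /= x_max addn1.
Qed.

Section Signs.
Variable R : comRingType.

Lemma prod_sign_blocks (d : nat -> bool) :
  \prod_(x < m * n) (if d x then -1 else 1) =
    \prod_(i < n) \prod_(j < m | d (i * m + j)%N) (-1) :> R.
Proof.
rewrite (@big_ord_blocks _ _ _ m n (fun k => if d k then -1 else 1)).
by apply: eq_bigr => i _; rewrite [RHS]big_mkcond.
Qed.

Lemma sign_card (S : {set 'I_(m * n)}) :
  (-1) ^+ #|S| = \prod_(i < n) \prod_(j < m | block_bits S i j) (-1) :> R.
Proof.
rewrite -prod_sign_blocks -prodr_const big_mkcond /=.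
by apply: eq_bigr => x _; rewrite mem_index_ord.
Qed.

Lemma sign_card_setI (S y : {set 'I_(m * n)}) :
  (-1) ^+ #|S :&: y| = \prod_(i < n) walsh m (block_bits S i) (block_code y i) :> R.
Proof.
rewrite -prodr_const big_mkcond /=.
rewrite (eq_bigr (fun x : 'I_(m * n) =>
  if mem_index S x && mem_index y x then -1 else 1)); last first.
  by move=> x _; rewrite !mem_index_ord inE.
rewrite (prod_sign_blocks (fun k => mem_index S k && mem_index y k)).
apply: eq_bigr => i _.
rewrite ffunE walsh_bits_val big_mkcond [RHS]big_mkcond /=.
by apply: eq_bigr => j _; rewrite /block_bits; case: (mem_index S _); case: (mem_index y _).
Qed.

Lemma sign_card_Sprime (S : {set 'I_(m * n)}) :
  (-1) ^+ #|S| = \prod_(i in Sprime S) \prod_(j < m | block_bits S i j) (-1) :> R.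
Proof.
rewrite sign_card [RHS]big_mkcond /=; apply: eq_bigr => i _.
case: ifP => // /negbT notin_i; rewrite big_pred0 // => j.
exact: negbTE (block_bits_notin notin_i (ltn_ord j)).
Qed.

Lemma walsh_notin_Sprime (S : {set 'I_(m * n)}) (i : 'I_n) v :
  i \notin Sprime S -> walsh m (block_bits S i) v = 1 :> R.
Proof.
move=> notin_i; rewrite /walsh big_pred0 // => j.
exact: negbTE (block_bits_notin notin_i (ltn_ord j)).
Qed.
End Signs.
End Blocks.

Lemma mul_expn_le_of_floor_log2 (R : realType) t m k : (0 < t)%N ->
  k%:Z <= Num.floor (ln ((t%:R / (2 ^ m)%:R : R)^-1) / ln 2%:R) -> (t * 2 ^ k <= 2 ^ m)%N.
Proof.
move=> t_gt0; set X := ln _ / ln 2%:R => le_k.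
have k_le_X : k%:R <= X.
  by apply: le_trans (floor_le X); rewrite -[k%:R]/((k%:Z)%:~R) ler_int.
have ln2_gt0 : 0 < ln (2%:R : R) by rewrite ln_gt0 // ltr1n.
rewrite /X ler_pdivlMr // [k%:R * _]mulr_natl -lnXn ?ltr0n // in k_le_X.
rewrite ler_ln ?posrE ?exprn_gt0 ?ltr0n ?invr_gt0 ?divr_gt0 ?ltr0n ?expn_gt0 // in k_le_X.
by rewrite invf_div ler_pdivlMr ?ltr0n // -natrX -natrM ler_nat mulnC in k_le_X.
Qed.

Section Reduction.
Variables (R : realType) (m t n : nat) (f : {set 'I_n} -> R) (S : {set 'I_(m * n)}).
Hypotheses (m_gt0 : (0 < m)%N) (t_gt0 : (0 < t)%N) (le_t : (t <= 2 ^ (m - 1))%N).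

Local Notation p := (t%:R / (2 ^ m)%:R : R).
Local Notation sigma := (Num.sqrt (p / (1 - p))).

Definition block_mass (i : 'I_n) (b : bool) : R :=
  \sum_(v : 'I_(2 ^ m) | (2 ^ m - t <= v)%N == b) walsh m (block_bits S i) v.

Definition block_gain (i : 'I_n) : R := - block_mass i true * sigma / t%:R.

Lemma lt_t_expn : (t < 2 ^ m)%N.
Proof. by apply: leq_ltn_trans le_t _; rewrite ltn_exp2l //; lia. Qed.

Lemma block_mass_top i :
  block_mass i true = \sum_(2 ^ m - t <= v < 2 ^ m) walsh m (block_bits S i) v.
Proof. by rewrite big_geq_mkord; apply: eq_bigl => v; rewrite eqb_id. Qed.

Lemma block_mass_total i :
  block_mass i false + block_mass i true = \sum_(v < 2 ^ m) walsh m (block_bits S i) v.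
Proof.
rewrite addrC [RHS](bigID (fun v : 'I_(2 ^ m) => 2 ^ m - t <= v)%N) /=.
by congr (_ + _); apply: eq_bigl => v; rewrite ?eqbF_neg ?eqb_id.
Qed.

Lemma block_mass_notin i : i \notin Sprime S ->
  block_mass i true = t%:R /\ block_mass i false = (2 ^ m - t)%:R.
Proof.
move=> notin_i.
have top : block_mass i true = t%:R.
  rewrite block_mass_top (eq_bigr (fun=> 1)) => [|v _]; last exact: walsh_notin_Sprime.
  by rewrite sumr_const_nat subKn // ltnW // lt_t_expn.
split=> //; apply: (addIr (block_mass i true)); rewrite block_mass_total top.
rewrite (eq_bigr (fun=> 1)) => [|v _]; last exact: walsh_notin_Sprime.
by rewrite sumr_const card_ord -natrD subnK // ltnW // lt_t_expn.
Qed.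

Lemma block_mass_in i : i \in Sprime S -> block_mass i false = - block_mass i true.
Proof.
case/Sprime_max_bit=> s [lt_sm bit_s max_s _].
by apply/eqP; rewrite -addr_eq0 block_mass_total (sum_walsh lt_sm bit_s max_s).
Qed.

Lemma block_mass_factor i b : 2^-1 ^+ m * block_mass i b =
  (if i \in Sprime S then block_gain i else 1) *
  ((if b then p else 1 - p) *
   (if i \in Sprime S then (if b then - Num.sqrt ((1 - p) / p) else sigma) else 1)).
Proof.
have expm_gt0 : 0 < (2 ^ m)%:R :> R by rewrite ltr0n expn_gt0.
have p_gt0 : 0 < p by rewrite divr_gt0 ?ltr0n ?expn_gt0.
have q_gt0 : 0 < 1 - p by rewrite subr_gt0 ltr_pdivrMr // mul1r ltr_nat lt_t_expn.
have odds_gt0 : 0 < p / (1 - p) by rewrite divr_gt0.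
have sigma_neq0 : sigma != 0 by rewrite gt_eqF // sqrtr_gt0.
have sigma_sqr : sigma * sigma = p / (1 - p) by rewrite -expr2 sqr_sqrtr // ltW.
have t_neq0 : t%:R != 0 :> R by rewrite pnatr_eq0 -lt0n.
have expm_neq0 : (2 ^ m)%:R != 0 :> R by rewrite gt_eqF.
rewrite exprVn -natrX /block_gain.
case: ifPn => [in_i|notin_i]; last first.
  have [top bot] := block_mass_notin notin_i.
  case: b; rewrite ?top ?bot mul1r mulr1; first by rewrite mulrC.
  by rewrite natrB ?(ltnW lt_t_expn) //; field.
case: b.
  rewrite -[(1 - p) / p]invf_div sqrtrV ?ltW //; field.
  by rewrite sigma_neq0 expm_neq0 t_neq0.
rewrite block_mass_in //.
transitivity (- block_mass i true / t%:R * (1 - p) * (sigma * sigma)); last by ring.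
rewrite sigma_sqr; field.
by rewrite expm_neq0 t_neq0 subr_eq0 eqr_nat gtn_eqF // lt_t_expn.
Qed.

Lemma fourier_Red :
  fourier 2^-1 (Red m t f) S = (\prod_(i in Sprime S) block_gain i) * fourier p f (Sprime S).
Proof.
rewrite fourier_half card_ord.
transitivity (2^-1 ^+ (m * n) * \sum_(Y : {ffun 'I_n -> 'I_(2 ^ m)})
    f [set i : 'I_n | (2 ^ m - t <= Y i)%N] * \prod_(i : 'I_n) walsh m (block_bits S i) (Y i)).
  rewrite (reindex (@block_code m n)) /=; last exact: onW_bij (block_code_bij n m_gt0).
  congr (_ * _); apply: eq_bigr => y _; rewrite sign_card_setI.
  by congr (f _ * _); apply/setP => i; rewrite !inE /hred Bin_block_code.
rewrite (sum_ffun_pattern (fun v : 'I_(2 ^ m) => 2 ^ m - t <= v)%N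
  (fun (i : 'I_n) (v : 'I_(2 ^ m)) => walsh m (block_bits S i) v)).
rewrite /fourier !big_distrr /=; apply: eq_bigr => x _.
have scale : 2^-1 ^+ (m * n) = \prod_(i < n) 2^-1 ^+ m :> R.
  by rewrite prodr_const card_ord -exprM.
rewrite scale mulrCA -big_split /=.
under eq_bigr => i _ do rewrite block_mass_factor.
rewrite big_split big_split /= -big_mkcond -mu_p_prod -u_S_prod /=.
by ring.
Qed.

Lemma normr_block_gain i : i \in Sprime S ->
  `|block_gain i| = (a_coef m t (s_idx S i))%:R / t%:R * sigma.
Proof.
case/Sprime_max_bit=> s [lt_sm bit_s max_s ->].
rewrite /block_gain !normrM normrN normfV ger0_norm ?sqrtr_ge0 // normr_nat.
rewrite block_mass_top (normr_sum_walsh_top lt_sm bit_s max_s) ?(ltnW lt_t_expn) //.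
rewrite /a_coef (_ : m - s.+1 + 1 = m - s)%N; last by lia.
by rewrite mulrAC.
Qed.

Lemma block_gain_small i : i \in Sprime S ->
  (s_idx S i)%:Z <= Num.floor (ln (p^-1) / ln 2%:R) ->
  block_gain i = - sigma * \prod_(j < m | block_bits S i j) (-1).
Proof.
case/Sprime_max_bit=> s [lt_sm bit_s max_s ->] /(mul_expn_le_of_floor_log2 t_gt0) small.
have le_t_half : (t <= 2 ^ (m - 1 - s))%N.
  rewrite -(leq_pmul2r (expn_gt0 2 s.+1)) -expnD.
  by apply: leq_trans small _; rewrite leq_exp2l //; lia.
rewrite /block_gain block_mass_top (sum_walsh_top_small lt_sm bit_s max_s) ?t_gt0 //.
by field; rewrite pnatr_eq0 -lt0n.
Qed.
End Reduction.

Theorem proposition2p2 (R : realType) (m t n : nat) (f : {set 'I_n} -> R)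
    (S : {set 'I_(m * n)}) :
  (1 <= m)%N -> (1 <= t <= 2 ^ (m - 1))%N ->
  let p : R := t%:R / (2 ^ m)%:R in
  let k := #|Sprime S| in
  `|fourier (2%:R^-1) (Red m t f) S| =
    (\prod_(i in Sprime S) ((a_coef m t (s_idx S i))%:R / t%:R)) *
    (Num.sqrt (p / (1 - p))) ^+ k * `|fourier p f (Sprime S)|
  /\
  ((forall i, i \in Sprime S ->
      (s_idx S i)%:Z <= Num.floor (ln (p^-1) / ln 2%:R)) ->
   fourier (2%:R^-1) (Red m t f) S =
     (- Num.sqrt (p / (1 - p))) ^+ k * (-1) ^+ #|S| * fourier p f (Sprime S)).
Proof.
move=> m_gt0 /andP[t_gt0 le_t] p k.
rewrite fourier_Red //; split.
  rewrite normrM normr_prod.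
  under eq_bigr => i Si do rewrite normr_block_gain //.
  by rewrite big_split /= prodr_const.
move=> small.
under eq_bigr => i Si do rewrite block_gain_small ?small //.
by rewrite big_split /= prodr_const (sign_card_Sprime R).
Qed.
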